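(* Let $G:[-1,1]\to\mathbb{R}$ be continuous and non-decreasing with $G(0)=0$, $\beta\in\mathbb{R}$, $Z$ a real random variable and $B$ an independent standard Brownian motion. For $\ell\in\mathbb M$ define $\Gamma[\ell]_t:=\mathbb{P}(\tau^\ell\le t)$, $t\ge0$, where $X^\ell_t:=Z+\beta t+B_t-G(\ell_t)$ and $\tau^\ell:=\inf\{t\ge0:X^\ell_t\le0\}$. Then for any $(\ell^n)_{n\ge1}\subset\mathbb M$ and $\ell\in\mathbb M$ with $\lim_{n\to\infty}\hat d(\ell^n,\ell)=0$, $$\limsup_{n\to\infty}\Gamma[\ell^n]_t\le\Gamma[\ell]_t\quad\text{for all }t\ge0.$$
   Context: $\mathbb M$ is the set of non-decreasing càdlàg functions $\ell$ on $[-1,\infty)$ with $\ell_t=0$ for $t\in[-1,0)$ and $\ell_\infty:=\lim_{t\to\infty}\ell_t\le1$. The Lévy distance on $\mathbb M$ is $d(\ell,\ell'):=\inf\{\varepsilon>0:\ \ell_{t+\varepsilon}+\varepsilon\ge\ell'_t\ge\ell_{t-\varepsilon}-\varepsilon\ \forall t\ge0\}$. For $t\ge0$ let $\ell_{t\wedge}$ denote the function $s\mapsto\ell_{\min(t,s)}$, $d_t(\ell,\ell'):=d(\ell_{t\wedge},\ell'_{t\wedge})$, and $\hat d(\ell,\ell'):=\int_0^\infty e^{-t}(d_t(\ell,\ell')\wedge1)\,\mathrm dt$. *)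

From HB Require Import structures.
From mathcomp Require Import all_boot all_order all_algebra.
From mathcomp Require Import all_classical all_reals all_analysis.
Set Implicit Arguments. Unset Strict Implicit. Unset Printing Implicit Defensive.
Import Order.TTheory GRing.Theory Num.Def Num.Theory.
Import numFieldNormedType.Exports.
Local Open Scope classical_set_scope.
Local Open Scope ring_scope.

Section Defs.
Context {R : realType}.

(* The class M.  Elements are represented as functions R -> R that vanish on
   (-oo,0) (the paper only defines them on [-1,oo), where they vanish on
   [-1,0)). *)
Definition in_M (l : R -> R) : Prop :=
  [/\ (forall t, t < 0 -> l t = 0),
      (forall x y, -1 <= x -> x <= y -> l x <= l y),
      (forall t, -1 <= t -> l x @[x --> t^'+] --> l t),
      (forall t, -1 < t -> cvg (l x @[x --> t^'-])) &
      exists2 c : R, l x @[x --> +oo] --> c & c <= 1].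

Definition levy_d (l l' : R -> R) : R :=
  inf [set e : R | 0 < e /\ forall t, 0 <= t ->
         l' t <= l (t + e) + e /\ l (t - e) - e <= l' t].

Definition stopped (l : R -> R) (t : R) : R -> R := fun s => l (Num.min t s).

Definition levy_dt (t : R) (l l' : R -> R) : R := levy_d (stopped l t) (stopped l' t).

Definition dhat (l l' : R -> R) : \bar R :=
  (\int[lebesgue_measure]_(t in `[0%R, +oo[%classic)
      (expR (- t) * Num.min (levy_dt t l l') 1)%:E)%E.

Context {d : measure_display} {Omega : measurableType d}.

Definition std_brownian (P : probability Omega R) (B : R -> Omega -> R) : Prop :=
  [/\ (forall t, 0 <= t -> measurable_fun setT (B t)),
      (forall w, B 0 w = 0),
      (forall w, {within `[0%R, +oo[%classic, continuous (fun t => B t w)}) &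
      (forall (n : nat) (s : nat -> R) (A : nat -> set R),
         s 0%N = 0 -> (forall i, (i < n)%N -> s i < s i.+1) ->
         (forall i, measurable (A i)) ->
         P (\bigcap_(i in `I_n) [set w | A i (B (s i.+1) w - B (s i) w)]) =
         (\prod_(i < n) normal_prob 0 (Num.sqrt (s i.+1 - s i)) (A i))%E)].

(* The random variable Z is independent of the process B: sigma(Z) and
   sigma(B_t, t >= 0) are independent, tested on the generating pi-system of
   finite-dimensional cylinder events. *)
Definition indep_rv_process (P : probability Omega R) (Z : Omega -> R)
    (B : R -> Omega -> R) : Prop :=
  forall (n : nat) (s : nat -> R) (A0 : set R) (A : nat -> set R),
    (forall i, 0 <= s i) -> measurable A0 -> (forall i, measurable (A i)) ->
    P ([set w | A0 (Z w)] `&` \bigcap_(i in `I_n) [set w | A i (B (s i) w)]) =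
    (P [set w | A0 (Z w)] * P (\bigcap_(i in `I_n) [set w | A i (B (s i) w)]))%E.

Definition Xproc (G : R -> R) (beta : R) (Z : Omega -> R) (B : R -> Omega -> R)
    (l : R -> R) (t : R) (w : Omega) : R :=
  Z w + beta * t + B t w - G (l t).

(* tau^l = inf { t >= 0 : X^l_t <= 0 }  (inf of the empty set = +oo) *)
Definition tau (G : R -> R) (beta : R) (Z : Omega -> R) (B : R -> Omega -> R)
    (l : R -> R) (w : Omega) : \bar R :=
  ereal_inf [set x%:E | x in [set s : R | 0 <= s /\ Xproc G beta Z B l s w <= 0]].

Definition Gamma (P : probability Omega R) (G : R -> R) (beta : R)
    (Z : Omega -> R) (B : R -> Omega -> R) (l : R -> R) (t : R) : \bar R :=
  P [set w | (tau G beta Z B l w <= t%:E)%E].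

End Defs.

(* Pathwise, [tau^l <= t] means that the continuous path [s |-> Z + beta s + B_s]
   meets the barrier [G (l_s)] at some time [s] in [[0, t]]; the infimum is
   attained because [l] is non-decreasing and right-continuous, so that [G o l]
   is upper semicontinuous.  Convergence in [dhat] gives, for large [n],
   [l^n_v <= l_(v+e) + e] on [[0, t]] with [e] small.  Hence a path that hits the
   barriers [G (l^n)] before [t] for infinitely many [n] hits, for every small
   [e], the relaxed barrier [G (min (l_(s+e) + e) 1) + e] before [t], and by
   compactness of [[0, t]] and right-continuity of [l] it hits [G (l)] itself.
   So [limsup_n {tau^(l^n) <= t}] is contained in [{tau^l <= t}], and the reverse
   Fatou lemma concludes. *)

From mathcomp Require Import all_boot all_order all_algebra.
From mathcomp Require Import all_classical all_reals all_analysis.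
From mathcomp Require Import lra.
Import Order.TTheory GRing.Theory Num.Theory.
Import numFieldNormedType.Exports.
Local Open Scope classical_set_scope.
Local Open Scope ring_scope.

Section real_analysis.
Context {R : realType}.
Implicit Types (a b z e : R).

Lemma cluster_seq_segment (u_ : R^nat) a b : (forall k, a <= u_ k <= b) ->
  exists2 z, a <= z <= b & cluster (u_ @ \oo) z.
Proof.
move=> uab; have PF : ProperFilter (u_ @ \oo) by exact: fmap_proper_filter.
have ev_ab : (u_ @ \oo) `[a, b]%classic.
  by exists 0%N => // k _ /=; rewrite in_itv /= uab.
have [z [/= zab zcl]] := @segment_compact R a b _ PF ev_ab.
by exists z; first by move: zab; rewrite in_itv.
Qed.

Lemma cluster_seq_close_late {u_ : R^nat} {z e} : cluster (u_ @ \oo) z -> 0 < e ->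
  exists p, `|z - u_ p| <= e /\ p.+1%:R^-1 <= e.
Proof.
move=> /cluster_eventuallyP zcl e0.
have [N] := ltr_add_invr e0; rewrite add0r => Ne.
have [p Np zp] := zcl e N e0; exists p; split => //.
by rewrite ltW // (le_lt_trans _ Ne) // lef_pV2 ?posrE // ler_nat.
Qed.

Lemma ge0_in_itv {x : R} : 0 <= x -> `[0, +oo[%classic x.
Proof. by rewrite /= in_itv /= => ->. Qed.

Lemma within_continuous_ball {A : set R} {f : R -> R} {s e} :
  {within A, continuous f} -> A s -> 0 < e ->
  exists2 eta, 0 < eta & forall r, A r -> `|s - r| < eta -> `|f s - f r| < e.
Proof.
move=> fc As e0; have /cvgrPdist_lt /(_ e e0) := (subspace_continuousP _ _).1 fc s As.
rewrite near_withinE => /nbhs_ballP [eta eta0 Heta].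
by exists eta => // r Ar sr; apply: Heta.
Qed.

End real_analysis.

Section reverse_fatou.
Context {d} {T : measurableType d} {R : realType}.
Variable mu : {finite_measure set T -> \bar R}.
Local Open Scope ereal_scope.

Lemma limn_esup_measure_le {F : (set T)^nat} : (forall k, measurable (F k)) ->
  limn_esup (mu \o F) <= mu (lim_sup_set F).
Proof.
move=> mF; have mU n : measurable (\bigcup_(k >= n) F k).
  by apply: bigcup_measurable => k _; exact: mF.
have U0fin : mu (\bigcup_(k >= 0) F k) < +oo by rewrite ltey_eq fin_num_measure.
rewrite limn_esup_lim; apply: (lee_cvg_to _ (lim_sup_set_cvg mu F mF U0fin)).
  exact: is_cvg_esups.
apply: nearW => n; apply: ge_ereal_sup => _ [k /= nk <-].
by apply: le_measure; rewrite ?inE // => w Fw; exists k.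
Qed.

End reverse_fatou.

Section integral_lower_bound.
Context {d} {T : measurableType d} {R : realType}.
Variable mu : {measure set T -> \bar R}.
Local Open Scope ereal_scope.
Import HBNNSimple.

(* No measurability of [f] is needed: the integral of a nonnegative function
   is the supremum of the integrals of the simple functions below it. *)
Lemma integral_ge_cst_measure (D A : set T) (c : R) (f : T -> \bar R) :
  measurable A -> A `<=` D -> (0 <= c)%R ->
  (forall x, D x -> 0 <= f x) -> (forall x, A x -> c%:E <= f x) ->
  c%:E * mu A <= \int[mu]_(x in D) f x.
Proof.
move=> mA AD c0 f0 fc; rewrite ge0_integralE //.
pose h := scale_nnsfun (indic_nnsfun R mA) c0.
have -> : c%:E * mu A = sintegral mu h.
  by rewrite (sintegralrM mu c (indic_nnsfun R mA)) sintegral_indic.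
apply: ereal_sup_ubound; exists h => // x /=.
rewrite /patch measurable_realfun.mindicE.
have [xA|xA] := boolP (x \in A).
  by rewrite mulr1 ifT; [apply: fc; rewrite -inE|rewrite inE; apply: AD; rewrite -inE].
by rewrite mulr0; case: ifPn => // xD; apply: f0; rewrite -inE.
Qed.

End integral_lower_bound.

Section hitting_closedness.
Context {R : realType}.
Variables (Y : R -> R) (K : R -> R -> R).
Hypothesis Y_cont : {within `[0, +oo[%classic, continuous Y}.
Hypothesis K_mono : forall x x' a a',
  0 <= x <= x' -> 0 <= a <= a' -> K x a <= K x' a'.
Hypothesis K_right_cont : forall s e, 0 <= s -> 0 < e ->
  exists2 eta, 0 < eta & K (s + eta) eta <= K s 0 + e.

(* A cluster point of approximate hitting times is a hitting time: [Y] is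
   continuous and [K] is upper semicontinuous at [(s, 0)] along [(s + eta, eta)]. *)
Lemma approximate_hitting {u} : 0 <= u ->
  (forall del, 0 < del -> exists2 s, 0 <= s <= u + del & Y s <= K (s + del) del) ->
  exists2 s, 0 <= s <= u & Y s <= K s 0.
Proof.
move=> u0 hit.
have /choice [s_ hs_] : forall k : nat, exists s,
    0 <= s <= u + k.+1%:R^-1 /\ Y s <= K (s + k.+1%:R^-1) k.+1%:R^-1.
  by move=> k; have [s ? ?] := hit k.+1%:R^-1 ltac:(by rewrite invr_gt0); exists s.
have [z /andP[z0 _] zcl] : exists2 z, 0 <= z <= u + 1 & cluster (s_ @ \oo) z.
  apply: cluster_seq_segment => k; have [/andP[-> sk] _] := hs_ k.
  by rewrite (le_trans sk) // lerD2l invf_le1 ?ler1n.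
have zu : z <= u.
  apply/ler_addgt0Pr => e e0; have e20 : 0 < e / 2 by rewrite divr_gt0.
  have [p [zp pe]] := cluster_seq_close_late zcl e20.
  have [/andP[_ sp] _] := hs_ p; set del := p.+1%:R^-1 in sp pe.
  have := ler_norm (z - s_ p); lra.
exists z; first by rewrite z0 zu.
apply/ler_addgt0Pr => e e0; have e20 : 0 < e / 2 by rewrite divr_gt0.
have [eta1 eta10 Yeta1] := within_continuous_ball Y_cont (ge0_in_itv z0) e20.
have [eta2 eta20 Keta2] := K_right_cont _ _ z0 e20.
pose rho := Num.min eta1 eta2 / 2.
have rho0 : 0 < rho by rewrite divr_gt0 // lt_min eta10.
have [m1 m2] : Num.min eta1 eta2 <= eta1 /\ Num.min eta1 eta2 <= eta2.
  by rewrite !ge_min !lexx ?orbT.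
have rho1 : rho < eta1 by rewrite /rho; lra.
have rho2 : 2 * rho <= eta2 by rewrite /rho; lra.
have [p [zp pe]] := cluster_seq_close_late zcl rho0.
have [/andP[sp0 _] Ysp] := hs_ p; set del := p.+1%:R^-1 in Ysp pe.
have del0 : 0 < del by rewrite invr_gt0.
have Yz : Y z < Y (s_ p) + e / 2.
  have := Yeta1 _ (ge0_in_itv sp0) (le_lt_trans zp rho1).
  have := ler_norm (Y z - Y (s_ p)); lra.
have K_sp : K (s_ p + del) del <= K (z + eta2) eta2.
  by apply: K_mono; have := ler_norm (s_ p - z); rewrite distrC; lra.
lra.
Qed.

End hitting_closedness.
Arguments approximate_hitting {R Y K} _ _ _ {u}.

Section class_M.
Context {R : realType} {l : R -> R}.
Hypothesis lM : in_M l.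

Lemma in_M_le x y : -1 <= x -> x <= y -> l x <= l y.
Proof. by case: lM => _ + _ _ _; apply. Qed.

Lemma in_M_bounds x : 0 <= l x <= 1.
Proof.
case: lM => l0 _ _ _ [c lc c1].
have [x0|x0] := ltP x 0; first by rewrite l0 // lexx ler01.
have x1 : -1 <= x by rewrite (le_trans _ x0) ?lerN10.
apply/andP; split; first by rewrite -(l0 (-1)) ?ltrN10 // in_M_le ?lexx.
apply: le_trans c1; rewrite leNgt; apply/negP => cx.
near +oo_R => M.
have xM : x <= M by near: M; apply: nbhs_pinfty_ge; rewrite num_real.
have : l M < l x by near: M; exact: (cvgr_lt _ lc _ cx).
by rewrite ltNge in_M_le.
Unshelve. all: by end_near. Qed.

End class_M.

(* The barrier [G o l] after shifting [l] by [a] in time and in space, plus a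
   slack [a]; the [min] keeps the argument of [G] in its domain [[-1, 1]]. *)
Definition relaxed_barrier {R : realType} (G l : R -> R) (x a : R) : R :=
  G (Num.min (l x + a) 1) + a.

Section relaxed_barrier_props.
Context {R : realType} {G l : R -> R}.
Hypothesis G_cont : {within `[-1, 1]%classic, continuous G}.
Hypothesis G_mono : forall x y, -1 <= x -> x <= y -> y <= 1 -> G x <= G y.
Hypothesis lM : in_M l.
Local Notation K := (relaxed_barrier G l).

Let relaxed_in x a : 0 <= a -> -1 <= Num.min (l x + a) 1 <= 1.
Proof.
move=> a0; have /andP[lx0 _] := in_M_bounds lM x.
by rewrite ge_min lexx orbT le_min andbT; apply/andP; split; lra.
Qed.

Lemma relaxed_barrier0 x : K x 0 = G (l x).
Proof. by rewrite /relaxed_barrier !addr0 min_l //; case/andP: (in_M_bounds lM x). Qed.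

Lemma le_relaxed_barrier x x' a a' :
  0 <= x <= x' -> 0 <= a <= a' -> K x a <= K x' a'.
Proof.
move=> /andP[x0 xx'] /andP[a0 aa']; apply: lerD => //.
have /andP[i1 _] := relaxed_in x a a0; have /andP[_ i2] := relaxed_in x' a' (le_trans a0 aa').
apply: G_mono => //; rewrite le_min !ge_min lexx !orbT andbT.
by rewrite lerD ?(in_M_le lM) // (le_trans (lerN10 _)).
Qed.

Lemma G_le_relaxed_barrier {y x e a} : 0 <= y <= 1 -> 0 <= x -> 0 <= e <= a ->
  y <= l (x + e) + e -> G y + e <= K (x + a) a.
Proof.
move=> /andP[y0 y1] x0 /andP[e0 ea] yle.
have Kxe : G y + e <= K (x + e) e.
  rewrite lerD2r; apply: G_mono; first by rewrite (le_trans (lerN10 _)).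
    by rewrite le_min yle.
  by rewrite ge_min lexx orbT.
by apply: (le_trans Kxe); apply: le_relaxed_barrier; rewrite ?lerD2l ?addr_ge0 ?e0.
Qed.

Lemma relaxed_barrier_right_cont s e : 0 <= s -> 0 < e ->
  exists2 eta, 0 < eta & K (s + eta) eta <= K s 0 + e.
Proof.
move=> s0 e0; rewrite relaxed_barrier0.
have e20 : 0 < e / 2 by rewrite divr_gt0.
have /andP[ls0 ls1] := in_M_bounds lM s.
have ls_in : `[-1, 1]%classic (l s) by rewrite /= in_itv /= ls1 (le_trans (lerN10 _)).
have [gam gam0 Ggam] := within_continuous_ball G_cont ls_in e20.
have g20 : 0 < gam / 2 by rewrite divr_gt0.
have [eta1 eta10 leta1] : exists2 eta1, 0 < eta1 &
    forall r, s < r -> r - s < eta1 -> `|l s - l r| < gam / 2.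
  case: lM => _ _ l_rc _ _.
  have /cvgrPdist_lt /(_ _ g20) := l_rc s (le_trans (lerN10 _) s0).
  rewrite near_withinE => /nbhs_ballP [eta1 eta10 Heta1].
  exists eta1 => // r sr rs; apply: Heta1 => //.
  by rewrite /ball /= distrC gtr0_norm // subr_gt0.
pose eta := Num.min (eta1 / 2) (Num.min (gam / 2) (e / 2)).
have eta0 : 0 < eta by rewrite !lt_min g20 e20 divr_gt0.
have [eta_1 eta_g eta_e] : [/\ eta <= eta1 / 2, eta <= gam / 2 & eta <= e / 2].
  by rewrite !ge_min !lexx ?orbT.
exists eta => //.
have l_eta := leta1 (s + eta) ltac:(lra) ltac:(lra).
have ls_le : l s <= l (s + eta) by rewrite (in_M_le lM) //; lra.
have /andP[r1 r2] := relaxed_in (s + eta) eta (ltW eta0).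
set r := Num.min _ _ in r1 r2 *.
have r_lo : l s <= r by rewrite le_min ls1 andbT; lra.
have r_hi : r <= l (s + eta) + eta by rewrite ge_min lexx.
have r_in : `[-1, 1]%classic r by rewrite /= in_itv /= r1 r2.
have r_close : `|l s - r| < gam.
  move: l_eta; rewrite !ltr_distlC => /andP[_ ?]; apply/andP; split; lra.
have := ltr_distlCDr (Ggam r r_in r_close).
rewrite /relaxed_barrier -/r; lra.
Qed.

End relaxed_barrier_props.

Section hitting_time.
Context {R : realType} {d : measure_display} {Omega : measurableType d}.
Context {G : R -> R} {beta : R} {Z : Omega -> R} {B : R -> Omega -> R}.
Hypothesis G_cont : {within `[-1, 1]%classic, continuous G}.
Hypothesis G_mono : forall x y, -1 <= x -> x <= y -> y <= 1 -> G x <= G y.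
Hypothesis B_cont : forall w, {within `[0, +oo[%classic, continuous (B ^~ w)}.

Let Y w s := Z w + beta * s + B s w.
Local Notation tau := (tau G beta Z B).

Let Y_cont w : {within `[0, +oo[%classic, continuous (Y w)}.
Proof.
apply: within_continuousD => //; apply: continuous_subspaceT => s.
by apply: cvgD; [exact: cvg_cst|apply: cvgMl_tmp; exact: cvg_id].
Qed.

Lemma approximate_hitting_path {l w t} : in_M l -> 0 <= t ->
  (forall del, 0 < del ->
     exists2 s, 0 <= s <= t + del & Y w s <= relaxed_barrier G l (s + del) del) ->
  exists2 s, 0 <= s <= t & Y w s <= G (l s).
Proof.
move=> lM t0 /(approximate_hitting (Y_cont w) (le_relaxed_barrier G_mono lM)
  (relaxed_barrier_right_cont G_cont lM) t0) [s st].
by rewrite relaxed_barrier0 //; exists s.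
Qed.

Lemma tau_leP {l w t} : in_M l -> 0 <= t ->
  (tau l w <= t%:E)%E <-> exists2 s, 0 <= s <= t & Y w s <= G (l s).
Proof.
move=> lM t0; split => [tau_t|[s /andP[s0 st] Ys]].
  apply: approximate_hitting_path => // del del0.
  have /ereal_inf_lt [_ [s [s0 Xs] <-]] : (tau l w < (t + del)%:E)%E.
    by apply: le_lt_trans tau_t _; rewrite lte_fin ltrDl.
  rewrite lte_fin => /ltW st; exists s; first by rewrite s0.
  move: Xs; rewrite /Xproc subr_le0 => /le_trans; apply; rewrite -[G _]addr0.
  by apply: (G_le_relaxed_barrier G_mono lM); rewrite ?(in_M_bounds lM) ?addr0 ?lexx ?(ltW del0).
apply: le_trans (_ : s%:E <= t%:E)%E; last by rewrite lee_fin.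
apply: ereal_inf_lbound; exists s => //; split => //.
by rewrite /Xproc subr_le0.
Qed.

Lemma tau_le_of_shifted_barriers {l w t} : in_M l -> 0 <= t ->
  (forall del, 0 < del -> exists l', [/\ in_M l', (tau l' w <= t%:E)%E &
     exists2 e, 0 <= e <= del & forall v, 0 <= v <= t -> l' v <= l (v + e) + e]) ->
  (tau l w <= t%:E)%E.
Proof.
move=> lM t0 near_l; apply/(tau_leP lM t0).
apply: approximate_hitting_path => // del del0.
have [l' [l'M /(tau_leP l'M t0) [s /andP[s0 st] Ys] [e edel l'_le]]] := near_l del del0.
exists s; first by rewrite s0 ler_wpDr // ltW.
have /andP[e0 _] := edel; have s0t : 0 <= s <= t by rewrite s0.
have := G_le_relaxed_barrier G_mono lM (in_M_bounds l'M s) s0 edel (l'_le s s0t).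
lra.
Qed.

Lemma tau_le_of_near_hits {l w t} : in_M l -> 0 <= t ->
  (forall v, 0 < v -> exists2 s, 0 <= s <= t + v & Y w s <= G (l s) + v) ->
  (tau l w <= t%:E)%E.
Proof.
move=> lM t0 near_hit; apply/(tau_leP lM t0).
apply: approximate_hitting_path => // del del0.
have [s /andP[s0 st] Ys] := near_hit del del0; exists s; first by rewrite s0.
have del01 : 0 <= del <= del by rewrite lexx ltW.
have l_le : l s <= l (s + del) + del.
  have : l s <= l (s + del) by apply: (in_M_le lM); lra.
  lra.
have := G_le_relaxed_barrier G_mono lM (in_M_bounds lM s) s0 del01 l_le; lra.
Qed.

Lemma rat_near_hit_of_tau_le {l w t} : in_M l -> 0 <= t -> (tau l w <= t%:E)%E ->
  forall v, 0 < v -> exists q : rat,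
    0 <= (ratr q : R) <= t + v /\ Y w (ratr q) <= G (l (ratr q)) + v.
Proof.
move=> lM t0 /(tau_leP lM t0) [s /andP[s0 st] Ys] v v0.
have [eta eta0 Yeta] := within_continuous_ball (Y_cont w) (ge0_in_itv s0) v0.
have /rat_in_itvoo[q] : s < s + Num.min eta v by rewrite ltrDl lt_min eta0.
rewrite in_itv /= => /andP[sq qs].
have [m1 m2] : Num.min eta v <= eta /\ Num.min eta v <= v by rewrite !ge_min !lexx ?orbT.
have q0 : 0 <= ratr q :> R by lra.
have sq_eta : `|s - ratr q| < eta by rewrite ltr_distlC; apply/andP; split; lra.
have /ltr_distlCDr Yq := Yeta _ (ge0_in_itv q0) sq_eta.
have Gls : G (l s) <= G (l (ratr q)).
  by rewrite -!(relaxed_barrier0 lM) le_relaxed_barrier // ?lexx // s0 /=; lra.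
by exists q; split; [apply/andP; split|]; lra.
Qed.

Lemma measurable_tau_le {l t} : in_M l -> 0 <= t ->
  measurable_fun setT Z -> (forall s, 0 <= s -> measurable_fun setT (B s)) ->
  measurable [set w | (tau l w <= t%:E)%E].
Proof.
move=> lM t0 mZ mB.
pose F (m : nat) (q : rat) : set Omega :=
  let r : R := ratr q in let v : R := m.+1%:R^-1 in
  if 0 <= r <= t + v then [set w | Y w r <= G (l r) + v] else set0.
have -> : [set w | (tau l w <= t%:E)%E] = \bigcap_m \bigcup_q F m q.
  apply/seteqP; split => w /= => [tau_t m _|Fw].
    have v0 : 0 < m.+1%:R^-1 :> R by rewrite invr_gt0.
    have [q [qt Yq]] := rat_near_hit_of_tau_le lM t0 tau_t _ v0.
    by exists q => //; rewrite /F ifT.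
  apply: tau_le_of_near_hits => // v v0.
  have [m] := ltr_add_invr v0; rewrite add0r; set u : R := m.+1%:R^-1 => uv.
  have [q _] := Fw m I; rewrite /F -/u; case: ifPn => [/andP[q0 qt] /= Yq|_ []//].
  by exists (ratr q); [rewrite q0 /=|]; lra.
apply: bigcapT_measurable => m; apply: bigcupT_measurable_rat => q.
rewrite /F; case: ifPn => [/andP[q0 _]|_]; last exact: measurable0.
rewrite -[X in measurable X]setTI; apply: measurable_fun_le => //.
apply: measurable_realfun.measurable_funD; last exact: mB.
by apply: measurable_realfun.measurable_funD => //; exact: measurable_cst.
Qed.

End hitting_time.

Section levy_distance.
Context {R : realType} {f g : R -> R}.
Hypothesis f01 : forall x, 0 <= f x <= 1.
Hypothesis g01 : forall x, 0 <= g x <= 1.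

Let levy_radii_neq0 : [set e : R | 0 < e /\ forall t, 0 <= t ->
  g t <= f (t + e) + e /\ f (t - e) - e <= g t] !=set0.
Proof.
exists 1; split => // t t0.
have /andP[? ?] := f01 (t + 1); have /andP[? ?] := f01 (t - 1); have /andP[? ?] := g01 t.
by split; lra.
Qed.

Lemma levy_d_ge0 : 0 <= levy_d f g.
Proof. by apply: lb_le_inf => // e [e0 _]; exact: ltW. Qed.

Lemma levy_d_lt c : levy_d f g < c ->
  exists e, [/\ 0 < e, e < c & forall t, 0 <= t -> f (t - e) - e <= g t].
Proof.
by move=> /(inf_lt levy_radii_neq0) [e [e0 fge] ec]; exists e; split => // t /fge [].
Qed.

End levy_distance.

Section levy_dt_props.
Context {R : realType} {f g : R -> R}.
Hypotheses (fM : in_M f) (gM : in_M g).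

Lemma levy_dt_ge0 s : 0 <= levy_dt s f g.
Proof. by apply: levy_d_ge0 => x; [exact: (in_M_bounds fM)|exact: (in_M_bounds gM)]. Qed.

Lemma shift_bound_of_levy_dt_lt {s c} : levy_dt s f g < c ->
  exists e, [/\ 0 < e, e < c & forall v, 0 <= v <= s -> f v <= g (v + e) + e].
Proof.
have f01 x : 0 <= stopped f s x <= 1 by exact: (in_M_bounds fM).
have g01 x : 0 <= stopped g s x <= 1 by exact: (in_M_bounds gM).
move=> /(levy_d_lt f01 g01) [e [e0 ec fg]].
exists e; split => // v /andP[v0 vs].
have := fg (v + e) ltac:(lra); rewrite /stopped addrK (min_r vs).
have : g (Num.min s (v + e)) <= g (v + e).
  by apply: (in_M_le gM); rewrite ?ge_min ?lexx ?orbT // le_min; apply/andP; split; lra.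
lra.
Qed.

(* Were [levy_dt s f g >= c] on [[t, t + 1]], the integrand of [dhat] would be
   at least [expR (- (t + 1)) * c] there. *)
Lemma levy_dt_small_of_dhat_small {t c} : 0 <= t -> 0 < c <= 1 ->
  (dhat f g < (expR (- (t + 1)) * c)%:E)%E ->
  exists2 s, t <= s <= t + 1 & levy_dt s f g < c.
Proof.
move=> t0 /andP[c0 c1] dhat_lt.
have [//|big] := pselect (exists2 s, t <= s <= t + 1 & levy_dt s f g < c).
exfalso; move: dhat_lt; apply/negP; rewrite -leNgt.
have mA : measurable (`[t, t + 1]%classic : set R) by exact: measurable_itv.
have leb1 : lebesgue_measure (`[t, t + 1]%classic : set R) = 1%E.
  by rewrite lebesgue_measure_itv /= lte_fin ltrDl ltr01 -EFinD addrAC subrr add0r.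
apply: le_trans (@integral_ge_cst_measure _ _ R lebesgue_measure _ _ _ _ mA _ _ _ _).
- by rewrite -[leLHS]mule1 le_eqVlt; apply/orP; left; apply/eqP; congr (_ * _)%E; exact: esym leb1.
- by move=> x; rewrite /= !in_itv /= => /andP[tx _]; rewrite andbT (le_trans t0).
- by rewrite mulr_ge0 ?expR_ge0 ?ltW.
- move=> x _; rewrite lee_fin mulr_ge0 ?expR_ge0 // le_min ler01 andbT levy_dt_ge0 //.
- move=> x; rewrite /= in_itv /= => /andP[tx xt]; rewrite lee_fin.
  apply: ler_pM; [exact: expR_ge0|exact: ltW|by rewrite ler_expR lerN2|].
  rewrite le_min c1 andbT leNgt; apply/negP => x_lt.
  by apply: big; exists x; rewrite ?tx.
Qed.

End levy_dt_props.

Lemma dhat_cvg0_shift_bound {R : realType} {ls : nat -> R -> R} {l : R -> R} {t del} :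
  (forall n, in_M (ls n)) -> in_M l -> (fun n => dhat (ls n) l) @ \oo --> 0%E ->
  0 <= t -> 0 < del -> \forall n \near \oo,
    exists2 e, 0 <= e <= del & forall v, 0 <= v <= t -> ls n v <= l (v + e) + e.
Proof.
move=> lsM lM dhat0 t0 del0.
pose c := Num.min del 1.
have [c01 cdel] : 0 < c <= 1 /\ c <= del.
  by rewrite lt_min del0 ltr01 !ge_min !lexx ?orbT.
have kap0 : 0 < expR (- (t + 1)) * c by case/andP: c01 => c0 _; rewrite mulr_gt0 ?expR_gt0.
have [dhat_fin dhat_cvg] := (fine_cvgP _ _).1 dhat0.
near=> n.
have dhat_lt : (dhat (ls n) l < (expR (- (t + 1)) * c)%:E)%E.
  rewrite -(@fineK _ (dhat (ls n) l)) ?lte_fin; last by near: n.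
  by near: n; exact: (cvgr_lt _ dhat_cvg _ kap0).
have [s /andP[ts _] ltc] := levy_dt_small_of_dhat_small (lsM n) lM t0 c01 dhat_lt.
have [e [e0 ec ebound]] := shift_bound_of_levy_dt_lt (lsM n) lM ltc.
exists e; first by rewrite ltW //=; lra.
by move=> v /andP[v0 vt]; apply: ebound; rewrite v0 /=; lra.
Unshelve. all: by end_near. Qed.

Theorem lemma3p1 (R : realType) (d : measure_display) (Omega : measurableType d)
    (P : probability Omega R) (G : R -> R) (beta : R) (Z : Omega -> R)
    (B : R -> Omega -> R) (ls : nat -> R -> R) (l : R -> R) :
  {within `[-1, 1]%classic, continuous G} ->
  (forall x y, -1 <= x -> x <= y -> y <= 1 -> G x <= G y) ->
  G 0 = 0 ->
  measurable_fun setT Z ->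
  std_brownian P B ->
  indep_rv_process P Z B ->
  (forall n, in_M (ls n)) ->
  in_M l ->
  (fun n => dhat (ls n) l) @ \oo --> 0%E ->
  forall t : R, 0 <= t ->
    (limn_esup (fun n => Gamma P G beta Z B (ls n) t) <= Gamma P G beta Z B l t)%E.
Proof.
move=> G_cont G_mono _ mZ [mB _ B_cont _] _ lsM lM dhat0 t t0.
pose A n := [set w | (tau G beta Z B (ls n) w <= t%:E)%E].
have mA n : measurable (A n) by exact: measurable_tau_le.
have limsup_sub : lim_sup_set A `<=` [set w | (tau G beta Z B l w <= t%:E)%E].
  move=> w limsup_w; apply: (tau_le_of_shifted_barriers G_cont G_mono B_cont lM t0).
  move=> del del0; have [N _ HN] := dhat_cvg0_shift_bound lsM lM dhat0 t0 del0.
  have [n /= Nn An] := limsup_w N I.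
  by exists (ls n); split => //; exact: HN.
apply: le_trans (limn_esup_measure_le P mA) _.
apply: le_measure limsup_sub; rewrite inE.
  by apply: bigcapT_measurable => n; apply: bigcup_measurable => k _.
exact: measurable_tau_le.
Qed.
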